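(* Let $\rho\in\Delta_{|\mathcal S|}$ have all entries positive, let $\pi_0$ be a non-optimal policy, and let $(\bar s,\bar a)$ be a non-optimal pair with $\pi_0(\bar a\mid\bar s)>0$ and $A^{\pi^*}(\bar s,\bar a)\ge\frac{1-\gamma}{|\mathcal S||\mathcal A|}[f_\rho(\pi_0)-f_\rho(\pi^* )]$. Then for any policy $\pi$, $$\pi(\bar a\mid\bar s)\le\frac{|\mathcal S||\mathcal A|}{(1-\gamma)\rho(\bar s)}\cdot\frac{f_\rho(\pi)-f_\rho(\pi^* )}{f_\rho(\pi_0)-f_\rho(\pi^* )}.$$
   Context: An unregularized infinite-horizon discounted MDP: finite $\mathcal S$, $\mathcal A$, transition probabilities $\mathcal P(s'\mid s,a)$, cost $c$, discount $\gamma\in[0,1)$. A policy assigns $\pi(\cdot\mid s)\in\Delta_{|\mathcal A|}$. $V^\pi(s)=\mathbb E[\sum_{t\ge0}\gamma^tc(s_t,a_t)\mid s_0=s,\ a_t\sim\pi(\cdot\mid s_t),\ s_{t+1}\sim\mathcal P(\cdot\mid s_t,a_t)]$, $Q^\pi(s,a)$ the same with $a_0=a$, $A^\pi(s,a):=Q^\pi(s,a)-V^\pi(s)$. $\pi^*$ is a fixed optimal policy. $f_\rho(\pi):=\sum_s\rho(s)V^\pi(s)$. A pair $(s,a)$ is non-optimal if $\pi^*(a\mid s)=0$; a policy $\pi$ is non-optimal if $f_\rho(\pi)-f_\rho(\pi^* )>0$. (Such a pair $(\bar s,\bar a)$ exists for every non-optimal $\pi_0$.) *)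

From HB Require Import structures.
From mathcomp Require Import all_boot all_order all_algebra.
From mathcomp Require Import all_classical all_reals all_analysis.
Set Implicit Arguments. Unset Strict Implicit. Unset Printing Implicit Defensive.
Import Order.TTheory GRing.Theory Num.Theory.
Local Open Scope ring_scope.

Section MDP.
Variables (R : realType) (S A : finType).

(* transition kernel P s a s' = P(s' | s, a) *)
Definition is_kernel (P : S -> A -> S -> R) : Prop :=
  forall s a, (forall s', 0 <= P s a s') /\ \sum_(s' : S) P s a s' = 1.

(* policy pi s a = pi(a | s) *)
Definition is_policy (pi : S -> A -> R) : Prop :=
  forall s, (forall a, 0 <= pi s a) /\ \sum_(a : A) pi s a = 1.

Definition is_distr (rho : S -> R) : Prop :=
  (forall s, 0 <= rho s) /\ \sum_(s : S) rho s = 1.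

(* law of (s_{t+1}, a_{t+1}) from the law d of (s_t, a_t) under pi *)
Definition step (P : S -> A -> S -> R) (pi : S -> A -> R)
  (d : S -> A -> R) : S -> A -> R :=
  fun s' a' => \sum_(s : S) \sum_(a : A) d s a * P s a s' * pi s' a'.

Definition law_t P pi (d0 : S -> A -> R) (t : nat) : S -> A -> R :=
  iter t (step P pi) d0.

Definition exp_cost (c : S -> A -> R) (d : S -> A -> R) : R :=
  \sum_(s : S) \sum_(a : A) d s a * c s a.

Definition disc_cost P c (gamma : R) pi (d0 : S -> A -> R) : R :=
  limn (fun n : nat => \sum_(t < n) gamma ^+ t * exp_cost c (law_t P pi d0 t)).

(* V^pi(s): s_0 = s, a_0 ~ pi(.|s) *)
Definition Vf P c gamma pi (s : S) : R :=
  disc_cost P c gamma pi (fun s0 a0 => (s0 == s)%:R * pi s0 a0).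

(* Q^pi(s,a): s_0 = s, a_0 = a *)
Definition Qf P c gamma pi (s : S) (a : A) : R :=
  disc_cost P c gamma pi (fun s0 a0 => ((s0 == s) && (a0 == a))%:R).

Definition Af P c gamma pi (s : S) (a : A) : R :=
  Qf P c gamma pi s a - Vf P c gamma pi s.

Definition f_rho P c gamma (rho : S -> R) pi : R :=
  \sum_(s : S) rho s * Vf P c gamma pi s.

Definition is_optimal P c gamma pistar : Prop :=
  is_policy pistar /\
  forall pi, is_policy pi -> forall s, Vf P c gamma pistar s <= Vf P c gamma pi s.

End MDP.

From HB Require Import structures.
From mathcomp Require Import all_boot all_order all_algebra.
From mathcomp Require Import all_classical all_reals all_analysis.
From mathcomp Require Import ring.
Set Implicit Arguments. Unset Strict Implicit. Unset Printing Implicit Defensive.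
Import Order.TTheory GRing.Theory Num.Theory.
Import numFieldNormedType.Exports.
Local Open Scope ring_scope.

(* Comparing pi with pistar one step ahead gives the performance-difference
   identity  V^pi - V^pistar = sum_a pi(a|.) A^pistar(.,a)
                               + gamma P_pi (V^pi - V^pistar).
   Optimality makes V^pi - V^pistar >= 0 everywhere and A^pistar >= 0 (a
   negative advantage at (s,a) would let the policy switching pistar to a at s
   beat pistar, by a maximum principle for the discounted operator). Hence
   f_rho(pi) - f_rho(pistar) >= rho(sb) (V^pi(sb) - V^pistar(sb))
                             >= rho(sb) pi(ab|sb) A^pistar(sb,ab),
   and the assumed lower bound on A^pistar(sb,ab) yields the claim. *)

Lemma sum_eq_natr_mul (R : pzSemiRingType) (T : finType) (y : T) (F : T -> R) :
  \sum_x (x == y)%:R * F x = F y.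
Proof.
rewrite (bigD1 y) //= eqxx mul1r big1 ?addr0 // => x /negbTE ->.
by rewrite mul0r.
Qed.

Section Laws.
Variables (R : realType) (S A : finType) (P : S -> A -> S -> R).
Hypothesis P_kernel : is_kernel P.

Definition is_sa_distr (d : S -> A -> R) : Prop :=
  (forall s a, 0 <= d s a) /\ \sum_s \sum_a d s a = 1.

Definition dirac_sa (s : S) (a : A) : S -> A -> R :=
  fun s0 a0 => ((s0 == s) && (a0 == a))%:R.

Definition policy_law (pi : S -> A -> R) (s : S) : S -> A -> R :=
  fun s0 a0 => (s0 == s)%:R * pi s0 a0.

Lemma step_exp_cost pi d s' a' :
  step P pi d s' a' = exp_cost (fun s a => P s a s' * pi s' a') d.
Proof. by apply: eq_bigr => s _; apply: eq_bigr => a _; rewrite mulrA. Qed.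

Lemma exp_cost_sum w (I : finType) (k : I -> R) (d : I -> S -> A -> R) :
  exp_cost w (fun s a => \sum_i k i * d i s a) = \sum_i k i * exp_cost w (d i).
Proof.
rewrite /exp_cost; under eq_bigr do under eq_bigr do rewrite mulr_suml.
under eq_bigr do rewrite exchange_big /=.
rewrite exchange_big /=; apply: eq_bigr => i _.
rewrite mulr_sumr; apply: eq_bigr => s _; rewrite mulr_sumr.
by apply: eq_bigr => a _; rewrite mulrA.
Qed.

Lemma exp_cost_dirac_sa w s a : exp_cost w (dirac_sa s a) = w s a.
Proof.
rewrite /exp_cost /dirac_sa.
under eq_bigr do under eq_bigr do rewrite -mulnb natrM -mulrA.
under eq_bigr do rewrite -mulr_sumr sum_eq_natr_mul.
exact: sum_eq_natr_mul.
Qed.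

Lemma step_sum pi (I : finType) (k : I -> R) (d : I -> S -> A -> R) :
  step P pi (fun s a => \sum_i k i * d i s a) =
  fun s a => \sum_i k i * step P pi (d i) s a.
Proof.
apply/funext => s'; apply/funext => a'.
by rewrite step_exp_cost exp_cost_sum; under [RHS]eq_bigr do rewrite step_exp_cost.
Qed.

Lemma law_t_sum pi (I : finType) (k : I -> R) (d : I -> S -> A -> R) t :
  law_t P pi (fun s a => \sum_i k i * d i s a) t =
  fun s a => \sum_i k i * law_t P pi (d i) t s a.
Proof. by elim: t => [//|t IH]; rewrite /law_t !iterS -!/(law_t _ _ _ t) IH step_sum. Qed.

Lemma policy_law_dirac pi s :
  policy_law pi s = fun s0 a0 => \sum_a pi s a * dirac_sa s a s0 a0.
Proof.
apply/funext => s0; apply/funext => a0; rewrite /policy_law /dirac_sa.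
under eq_bigr do rewrite -mulnb natrM mulrCA.
rewrite -mulr_sumr; case: eqP => [->|_]; last by rewrite !mul0r.
by under eq_bigr do rewrite mulrC eq_sym; rewrite sum_eq_natr_mul.
Qed.

Lemma step_dirac_sa pi s a :
  step P pi (dirac_sa s a) = fun s' a' => \sum_x P s a x * policy_law pi x s' a'.
Proof.
apply/funext => s'; apply/funext => a'.
rewrite step_exp_cost exp_cost_dirac_sa /policy_law.
by under eq_bigr do rewrite mulrCA eq_sym; rewrite sum_eq_natr_mul.
Qed.

Lemma step_distr pi d : is_policy pi -> is_sa_distr d -> is_sa_distr (step P pi d).
Proof.
move=> pi_policy [d_ge0 d_sum1]; split.
  move=> s' a'; apply: sumr_ge0 => s _; apply: sumr_ge0 => a _.
  by rewrite !mulr_ge0 //; [case: (P_kernel s a) | case: (pi_policy s')].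
rewrite /step (eq_bigr (fun s' => \sum_s \sum_a d s a * P s a s')); last first.
  move=> s' _; rewrite exchange_big /=; apply: eq_bigr => s _.
  rewrite exchange_big /=; apply: eq_bigr => a _.
  by rewrite -mulr_sumr (proj2 (pi_policy s')) mulr1.
rewrite exchange_big /= -d_sum1; apply: eq_bigr => s _.
rewrite exchange_big /=; apply: eq_bigr => a _.
by rewrite -mulr_sumr (proj2 (P_kernel s a)) mulr1.
Qed.

Lemma law_t_distr pi d t : is_policy pi -> is_sa_distr d -> is_sa_distr (law_t P pi d t).
Proof.
move=> pi_policy d_distr; elim: t => [//|t IH].
by rewrite /law_t iterS; apply: step_distr.
Qed.

Lemma dirac_sa_distr s a : is_sa_distr (dirac_sa s a).
Proof.
split=> [s0 a0|]; first exact: ler0n.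
have := exp_cost_dirac_sa (fun _ _ => 1) s a.
by rewrite /exp_cost; under eq_bigr do under eq_bigr do rewrite mulr1.
Qed.

Lemma policy_law_distr pi s : is_policy pi -> is_sa_distr (policy_law pi s).
Proof.
move=> pi_policy; split=> [s0 a0|].
  by rewrite mulr_ge0 ?ler0n //; case: (pi_policy s0).
rewrite /policy_law; under eq_bigr do rewrite -mulr_sumr.
by rewrite sum_eq_natr_mul (proj2 (pi_policy s)).
Qed.

Section Discounted.
Variables (c : S -> A -> R) (gamma : R).
Hypotheses (gamma_ge0 : 0 <= gamma) (gamma_lt1 : gamma < 1).

Definition disc_partial pi d (n : nat) : R :=
  \sum_(t < n) gamma ^+ t * exp_cost c (law_t P pi d t).

Lemma disc_costE pi d : disc_cost P c gamma pi d = limn (disc_partial pi d).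
Proof. by []. Qed.

Definition cost_l1 : R := \sum_s \sum_a `|c s a|.

Lemma cost_le_l1 s a : `|c s a| <= cost_l1.
Proof.
rewrite /cost_l1 (bigD1 s) //= (bigD1 a) //= -addrA lerDl.
by rewrite addr_ge0 // !sumr_ge0 // => *; rewrite sumr_ge0.
Qed.

Lemma exp_cost_le d : is_sa_distr d -> `|exp_cost c d| <= cost_l1.
Proof.
move=> [d_ge0 d_sum1]; rewrite -[cost_l1]mul1r -d_sum1 !mulr_suml.
apply: le_trans (ler_norm_sum _ _ _) _; apply: ler_sum => s _.
rewrite mulr_suml; apply: le_trans (ler_norm_sum _ _ _) _; apply: ler_sum => a _.
by rewrite normrM ger0_norm // ler_wpM2l // cost_le_l1.
Qed.

Lemma disc_partial_cvg pi d : is_policy pi -> is_sa_distr d -> cvgn (disc_partial pi d).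
Proof.
move=> pi_policy d_distr.
have -> : disc_partial pi d = series (fun t => gamma ^+ t * exp_cost c (law_t P pi d t)).
  by apply/funext => n; rewrite /series /= big_mkord.
apply: normed_cvg; apply: (@series_le_cvg _ _ (geometric cost_l1 gamma)).
- by move=> n; exact: normr_ge0.
- move=> n; rewrite /geometric /= mulr_ge0 ?exprn_ge0 //.
  by apply: sumr_ge0 => s _; apply: sumr_ge0.
- move=> n; rewrite /geometric /= normrM ger0_norm ?exprn_ge0 // mulrC.
  by rewrite ler_wpM2r ?exprn_ge0 // exp_cost_le //; exact: law_t_distr.
- by apply: is_cvg_geometric_series; rewrite ger0_norm.
Qed.

Lemma disc_cost_sum pi (I : finType) (k : I -> R) (d : I -> S -> A -> R) :
  is_policy pi -> (forall i, is_sa_distr (d i)) ->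
  disc_cost P c gamma pi (fun s a => \sum_i k i * d i s a) =
  \sum_i k i * disc_cost P c gamma pi (d i).
Proof.
move=> pi_policy d_distr; rewrite !disc_costE; apply/cvg_lim => //.
have -> : disc_partial pi (fun s a => \sum_i k i * d i s a) =
          fun n => \sum_i k i * disc_partial pi (d i) n.
  apply/funext => n; rewrite /disc_partial.
  under eq_bigr do rewrite law_t_sum exp_cost_sum mulr_sumr.
  rewrite exchange_big /=; apply: eq_bigr => i _.
  by rewrite mulr_sumr; apply: eq_bigr => t _; rewrite mulrCA.
apply: cvg_big => [|i _]; first exact: add_continuous.
by apply: cvgMl_tmp; exact: disc_partial_cvg.
Qed.

Lemma disc_cost_step pi d : is_policy pi -> is_sa_distr d ->
  disc_cost P c gamma pi d =
  exp_cost c d + gamma * disc_cost P c gamma pi (step P pi d).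
Proof.
move=> pi_policy d_distr; rewrite !disc_costE; apply/cvg_lim => //.
rewrite -cvg_shiftS.
have -> : [sequence disc_partial pi d n.+1]_n =
          fun n => exp_cost c d + gamma * disc_partial pi (step P pi d) n.
  apply/funext => n; rewrite /= /disc_partial big_ord_recl /= mul1r mulr_sumr.
  by congr (_ + _); apply: eq_bigr => t _; rewrite exprS -mulrA /law_t -iterSr.
apply: cvgD; first exact: cvg_cst.
by apply: cvgMl_tmp; apply: disc_partial_cvg => //; exact: step_distr.
Qed.

Lemma Vf_Qf pi s : is_policy pi ->
  Vf P c gamma pi s = \sum_a pi s a * Qf P c gamma pi s a.
Proof.
move=> pi_policy; rewrite /Vf -/(policy_law pi s) policy_law_dirac.
by rewrite disc_cost_sum // => a; exact: dirac_sa_distr.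
Qed.

Lemma Qf_bellman pi s a : is_policy pi ->
  Qf P c gamma pi s a = c s a + gamma * \sum_x P s a x * Vf P c gamma pi x.
Proof.
move=> pi_policy; rewrite /Qf -/(dirac_sa s a) disc_cost_step //; last exact: dirac_sa_distr.
rewrite exp_cost_dirac_sa step_dirac_sa disc_cost_sum // => x.
exact: policy_law_distr.
Qed.

Lemma sum_policy_Af pi s : is_policy pi ->
  \sum_a pi s a * Af P c gamma pi s a = 0.
Proof.
move=> pi_policy; rewrite /Af; under eq_bigr do rewrite mulrBr.
by rewrite sumrB -mulr_suml (proj2 (pi_policy s)) mul1r -Vf_Qf // subrr.
Qed.

Lemma Qf_sub pi pi' s a : is_policy pi -> is_policy pi' ->
  Qf P c gamma pi' s a - Qf P c gamma pi s a =
  gamma * \sum_x P s a x * (Vf P c gamma pi' x - Vf P c gamma pi x).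
Proof.
move=> pi_policy pi'_policy; rewrite !Qf_bellman // opprD addrACA subrr add0r.
rewrite -mulrBr -sumrB.
by under [X in _ = _ * X]eq_bigr do rewrite mulrBr.
Qed.

Lemma Vf_sub pi pi' s : is_policy pi -> is_policy pi' ->
  Vf P c gamma pi' s - Vf P c gamma pi s =
  \sum_a pi' s a * Af P c gamma pi s a +
  gamma * \sum_a pi' s a * \sum_x P s a x * (Vf P c gamma pi' x - Vf P c gamma pi x).
Proof.
move=> pi_policy pi'_policy.
rewrite mulr_sumr -big_split /= [Vf _ _ _ pi' s]Vf_Qf //.
rewrite -[Vf _ _ _ pi s]mul1r -(proj2 (pi'_policy s)) mulr_suml -sumrB.
by apply: eq_bigr => a _; rewrite [gamma * _]mulrCA -Qf_sub // /Af; ring.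
Qed.

Lemma max_principle pi (D : S -> R) : is_policy pi ->
  (forall s, D s <= gamma * \sum_a pi s a * \sum_x P s a x * D x) ->
  forall s, D s <= 0.
Proof.
move=> pi_policy D_le s.
have [m _ D_le_m] := @arg_maxP _ R S s xpredT D isT.
suff: D m <= 0 by apply: le_trans (D_le_m s isT).
have Dm_le : D m <= gamma * D m.
  apply: le_trans (D_le m) _; apply: ler_wpM2l => //.
  rewrite -[leRHS]mul1r -(proj2 (pi_policy m)) mulr_suml.
  apply: ler_sum => a _; apply: ler_wpM2l; first by case: (pi_policy m).
  rewrite -[leRHS]mul1r -(proj2 (P_kernel m a)) mulr_suml.
  apply: ler_sum => x _; apply: ler_wpM2l; first by case: (P_kernel m a).
  exact: D_le_m.
have one_sub_gamma_gt0 : 0 < 1 - gamma by rewrite subr_gt0.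
by rewrite -(pmulr_rle0 _ one_sub_gamma_gt0) mulrBl mul1r subr_le0.
Qed.

Definition switch_at (pi : S -> A -> R) (s : S) (a : A) : S -> A -> R :=
  fun x b => if x == s then (b == a)%:R else pi x b.

Lemma switch_at_policy pi s a : is_policy pi -> is_policy (switch_at pi s a).
Proof.
move=> pi_policy x; rewrite /switch_at; case: eqP => _; last exact: pi_policy.
split=> [b|]; first exact: ler0n.
by under eq_bigr do rewrite -[_%:R]mulr1; rewrite sum_eq_natr_mul.
Qed.

Lemma Af_optimal_ge0 pistar s a : is_optimal P c gamma pistar ->
  0 <= Af P c gamma pistar s a.
Proof.
move=> [pistar_policy pistar_min]; rewrite leNgt; apply/negP => Af_lt0.
(* Against pi', the gap D = V^pi' - V^pistar has nonpositive one-step gain,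
   so the maximum principle squeezes D to 0, which forces A^pistar(s,a) = 0. *)
pose pi' := switch_at pistar s a.
have pi'_policy : is_policy pi' by exact: switch_at_policy.
pose D x := Vf P c gamma pi' x - Vf P c gamma pistar x.
have D_ge0 x : 0 <= D x by rewrite subr_ge0 pistar_min.
have D_eq x : D x = \sum_b pi' x b * Af P c gamma pistar x b +
                    gamma * \sum_b pi' x b * \sum_y P x b y * D y.
  exact: Vf_sub.
have gain_le0 x : \sum_b pi' x b * Af P c gamma pistar x b <= 0.
  rewrite /pi' /switch_at; case: eqP => [->|_]; last by rewrite sum_policy_Af.
  by rewrite sum_eq_natr_mul ltW.
have D_le0 : forall x, D x <= 0.
  by apply: (max_principle pi'_policy) => x; rewrite {1}D_eq gerDr.
have D0 x : D x = 0 by apply/le_anti; rewrite D_le0 D_ge0.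
have tail0 : \sum_b pi' s b * \sum_y P s b y * D y = 0.
  by apply: big1 => b _; rewrite big1 ?mulr0 // => y _; rewrite D0 mulr0.
move: (D_eq s); rewrite D0 tail0 mulr0 addr0.
rewrite /pi' /switch_at eqxx sum_eq_natr_mul => Af0.
by move: Af_lt0; rewrite -Af0 ltxx.
Qed.

Lemma Af_optimal_le_Vf_sub pistar pi s a :
  is_optimal P c gamma pistar -> is_policy pi ->
  pi s a * Af P c gamma pistar s a <= Vf P c gamma pi s - Vf P c gamma pistar s.
Proof.
move=> pistar_opt pi_policy; have [pistar_policy pistar_min] := pistar_opt.
have pi_ge0 x b : 0 <= pi x b by case: (pi_policy x).
rewrite Vf_sub //; apply: ler_wpDr.
  apply: mulr_ge0 => //; apply: sumr_ge0 => b _; rewrite mulr_ge0 //.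
  apply: sumr_ge0 => y _; rewrite mulr_ge0 ?subr_ge0 ?pistar_min //.
  by case: (P_kernel s b).
rewrite (bigD1 a) //= lerDl sumr_ge0 // => b _.
by rewrite mulr_ge0 ?Af_optimal_ge0.
Qed.

Lemma Vf_sub_le_f_rho_sub pistar pi (rho : S -> R) s :
  is_optimal P c gamma pistar -> is_policy pi -> (forall x, 0 <= rho x) ->
  rho s * (Vf P c gamma pi s - Vf P c gamma pistar s) <=
  f_rho P c gamma rho pi - f_rho P c gamma rho pistar.
Proof.
move=> [_ pistar_min] pi_policy rho_ge0.
rewrite /f_rho -sumrB (bigD1 s) //= mulrBr lerDl sumr_ge0 // => x _.
by rewrite -mulrBr mulr_ge0 ?subr_ge0 ?pistar_min ?rho_ge0.
Qed.

End Discounted.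
End Laws.

Theorem lemma3p8 (R : realType) (S A : finType)
  (P : S -> A -> S -> R) (c : S -> A -> R) (gamma : R)
  (pistar pi0 : S -> A -> R) (rho : S -> R) (sb : S) (ab : A) :
  is_kernel P ->
  0 <= gamma -> gamma < 1 ->
  is_optimal P c gamma pistar ->
  is_distr rho -> (forall s, 0 < rho s) ->
  is_policy pi0 ->
  f_rho P c gamma rho pi0 - f_rho P c gamma rho pistar > 0 ->
  pistar sb ab = 0 ->
  pi0 sb ab > 0 ->
  Af P c gamma pistar sb ab >=
    (1 - gamma) / (#|S|%:R * #|A|%:R)
    * (f_rho P c gamma rho pi0 - f_rho P c gamma rho pistar) ->
  forall pi : S -> A -> R, is_policy pi ->
  pi sb ab <=
    (#|S|%:R * #|A|%:R) / ((1 - gamma) * rho sb)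
    * ((f_rho P c gamma rho pi - f_rho P c gamma rho pistar)
       / (f_rho P c gamma rho pi0 - f_rho P c gamma rho pistar)).
Proof.
(* The bound holds without is_distr rho and without the assumptions on pi0
   and on pistar at (sb, ab): they only describe how such a pair is chosen. *)
move=> P_kernel gamma_ge0 gamma_lt1 pistar_opt _ rho_gt0 _ gap0_gt0 _ _ Af_ge pi pi_policy.
set gap0 := f_rho _ _ _ _ pi0 - _ in gap0_gt0 Af_ge *.
set gap := f_rho _ _ _ _ pi - _.
set N : R := #|S|%:R * #|A|%:R in Af_ge *.
have N_gt0 : 0 < N by rewrite mulr_gt0 // ltr0n; apply/card_gt0P; [exists sb | exists ab].
have one_sub_gamma_gt0 : 0 < 1 - gamma by rewrite subr_gt0.
have rho_ge0 x : 0 <= rho x := ltW (rho_gt0 x).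
have gap_ge : rho sb * (pi sb ab * Af P c gamma pistar sb ab) <= gap.
  apply: le_trans (Vf_sub_le_f_rho_sub sb pistar_opt pi_policy rho_ge0).
  by apply: ler_wpM2l => //; exact: Af_optimal_le_Vf_sub.
rewrite mulrA ler_pdivlMr // mulrAC ler_pdivlMr ?mulr_gt0 //.
have -> : pi sb ab * gap0 * ((1 - gamma) * rho sb) =
          N * (rho sb * (pi sb ab * ((1 - gamma) / N * gap0))).
  by field; rewrite gt_eqF.
rewrite ler_pM2l //; apply: le_trans gap_ge.
rewrite ler_pM2l //; apply: ler_wpM2l => //.
by case: (pi_policy sb).
Qed.
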